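(* Let $m\in\mathbb{N}_{>0}$, $(\theta_1,\dots,\theta_m)\in\mathbb{R}_{>0}^m$ and $(q_1,\dots,q_m)\in(0,1)^m$. Let $\{Y_j\}_{j\in\mathbb{N}}$ (with $\mathbb{N}=\{0,1,2,\dots\}$) be independent random variables with values in $\{0,1,\dots,m\}$ such that \[ \mathbb{P}(Y_j=0)=\frac{1}{1+\sum_{\ell=1}^m\theta_\ell q_\ell^j},\qquad \mathbb{P}(Y_j=k)=\frac{\theta_k q_k^j}{1+\sum_{\ell=1}^m\theta_\ell q_\ell^j},\quad k=1,\dots,m, \] and define $X_k:=\sum_{j=0}^{\infty}\mathbf{1}(Y_j=k)$ for $k=1,\dots,m$. Then $(X_1,\dots,X_m)\overset{d}{\sim}\mathrm{He}(\theta_1,\dots,\theta_m;q_1,\dots,q_m)$.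
   Context: Multi-dimensional Heine distribution: for $(\theta_1,\dots,\theta_m)\in\mathbb{R}_{>0}^m$ and $(q_1,\dots,q_m)\in(0,1)^m$, an $\mathbb{N}^m$-valued random variable $(X_1,\dots,X_m)$ has distribution $\mathrm{He}(\theta_1,\dots,\theta_m;q_1,\dots,q_m)$ if for all $(\alpha_1,\dots,\alpha_m)\in\mathbb{N}^m$, \[ \mathbb{P}(X_1=\alpha_1,\dots,X_m=\alpha_m)=\frac{\theta_1^{\alpha_1}\cdots\theta_m^{\alpha_m}\sum_{J_1,\dots,J_m}\prod_{k=1}^m q_k^{\sum_{j\in J_k}j}}{\prod_{j=0}^{\infty}\bigl(1+\sum_{k=1}^m\theta_k q_k^j\bigr)}, \] where the sum runs over all tuples of pairwise disjoint subsets $J_1,\dots,J_m\subseteq\mathbb{N}$ with $|J_k|=\alpha_k$ for each $k$. *)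

From HB Require Import structures.
From mathcomp Require Import all_boot all_order all_algebra finmap.
From mathcomp Require Import all_classical all_reals all_analysis.
Set Implicit Arguments. Unset Strict Implicit. Unset Printing Implicit Defensive.
Import Order.TTheory GRing.Theory Num.Theory numFieldNormedType.Exports.
Local Open Scope classical_set_scope.
Local Open Scope ring_scope.

Definition mutually_independent_nat {d} {T : measurableType d} {R : realType}
  (P : probability T R) (Y : nat -> T -> nat) : Prop :=
  forall (s : {fset nat}) (B : nat -> set nat),
    P (\bigcap_(j in [set` s]) (Y j @^-1` B j)) =
    (\prod_(j <- s) P (Y j @^-1` B j))%E.

(* X_k := sum_{j>=0} 1(Y_j = k), with k : 'I_m standing for the value k+1;
   valued in the extended reals (a priori possibly +oo). *)
Definition Xcount {T : Type} {R : realType} {m : nat}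
  (Y : nat -> T -> nat) (k : 'I_m) (w : T) : \bar R :=
  (\sum_(0 <= j <oo) ((Y j w == k.+1)%:R : R)%:E)%E.

Definition heine_Z {R : realType} {m : nat} (theta q : 'I_m -> R) : R :=
  limn (fun n => \prod_(j < n) (1 + \sum_(k < m) theta k * q k ^+ j)).

Definition heine_tuples {m : nat} (alpha : 'I_m -> nat) :
  set ('I_m -> {fset nat}) :=
  [set J | (forall k, #|` J k| = alpha k) /\
           (forall k l, k != l -> forall x, x \in J k -> x \notin J l)].

(* P(X = alpha) for X ~ He(theta; q) *)
Definition heine_pmf {R : realType} {m : nat} (theta q : 'I_m -> R)
  (alpha : 'I_m -> nat) : \bar R :=
  ((\prod_(k < m) theta k ^+ alpha k)%:E *
   (\esum_(J in heine_tuples alpha)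
       (\prod_(k < m) q k ^+ (\sum_(j <- J k) j)%N)%:E) *
   (heine_Z theta q)^-1%:E)%E.

From HB Require Import structures.
From mathcomp Require Import all_boot all_order all_algebra finmap.
From mathcomp Require Import all_classical all_reals all_analysis.
Import Order.TTheory GRing.Theory Num.Theory numFieldNormedType.Exports.
Local Open Scope classical_set_scope.
Local Open Scope ring_scope.

(* Put w_j(0) = 1 and w_j(k) = theta_k q_k^j, so that P(Y_j = v) = w_j(v) / (1 + sum_l theta_l q_l^j).
   For a word c of length N over {0, ..., m}, independence and continuity from above give
   P(Y = c followed by zeros) = prod_(j < N) w_j(c_j) / Z, with Z the infinite product of the
   normalizers.  Since X_k = alpha_k forces Y_j <> k for large j, the event {X = alpha} is the
   increasing union over N of the events that Y vanishes from N on and has counts alpha, each a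
   finite disjoint union of the events above over the words with counts alpha.  Sending such a
   word to its position sets J_k = {j | c_j = k} is a bijection onto the Heine tuples inside
   [0, N), under which prod_j w_j(c_j) = prod_k theta_k^alpha_k q_k^(sum J_k).  Letting N grow,
   continuity from below on the left and monotone convergence of the partial sums to the sum
   over all tuples on the right give the Heine weights. *)

Section ProductOnePlus.
Context {R : realType} {a : nat -> R}.
Hypothesis a_ge0 : forall j, 0 <= a j.

Lemma nondecreasing_prod1D : nondecreasing_seq (fun n => \prod_(j < n) (1 + a j)).
Proof.
apply/nondecreasing_seqP => n; rewrite big_ord_recr /= ler_peMr ?lerDl //.
by apply: prodr_ge0 => j _; rewrite addr_ge0.
Qed.

Lemma prod1D_le_expR n : \prod_(j < n) (1 + a j) <= expR (\sum_(j < n) a j).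
Proof.
rewrite expR_sum; apply: ler_prod => j _.
by rewrite addr_ge0 //= expR_ge1Dx.
Qed.

Context {B : R}.
Hypothesis sum_a_le : forall n, \sum_(j < n) a j <= B.

Lemma cvgn_prod1D : cvgn (fun n => \prod_(j < n) (1 + a j)).
Proof.
apply: nondecreasing_is_cvgn; first exact: nondecreasing_prod1D.
exists (expR B) => _ [n _ <-].
by rewrite (le_trans (prod1D_le_expR n)) // ler_expR.
Qed.

Lemma limn_prod1D_ge1 : 1 <= limn (fun n => \prod_(j < n) (1 + a j)).
Proof.
have := nondecreasing_cvgn_le nondecreasing_prod1D cvgn_prod1D 0.
by rewrite big_ord0.
Qed.

End ProductOnePlus.

Lemma nondecreasing_bigcup_finite_sub {T : choiceType} {S : nat -> set T} {A : set T} :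
  {homo S : n p / (n <= p)%N >-> n `<=` p} ->
  finite_set A -> A `<=` \bigcup_n S n -> exists n, A `<=` S n.
Proof.
move=> ndS /finite_fsetP[X ->{A}] XS.
suff [n Sn] : exists n, forall x, x \in enum_fset X -> S n x.
  by exists n => x /= Xx; exact: Sn.
elim: (enum_fset X) (fun x (xX : x \in enum_fset X) => XS x xX) => [|x s IH] sub.
  by exists 0%N.
have [n1 _ Sx] := sub x (mem_head _ _).
have [n2 Ss] := IH (fun y ys => sub y (mem_behead (s := x :: s) ys)).
exists (maxn n1 n2) => y; rewrite in_cons => /predU1P[->|ys].
- exact: ndS (leq_maxl _ _) _ Sx.
- exact: ndS (leq_maxr _ _) _ (Ss _ ys).
Qed.

Lemma esum_nondecreasing_cvg (R : realType) (T : choiceType) (S : nat -> set T)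
    (a : T -> \bar R) :
  (forall x, (0 <= a x)%E) -> (forall n, finite_set (S n)) ->
  {homo S : n p / (n <= p)%N >-> n `<=` p} ->
  (fun n => \sum_(x \in S n) a x)%E @ \oo --> (\esum_(x in \bigcup_n S n) a x)%E.
Proof.
move=> a_ge0 finS ndS.
have nd_sum : nondecreasing_seq (fun n => \sum_(x \in S n) a x)%E.
  by move=> n p np; apply: lee_fsum_nneg_subset => //; exact/subsetP/ndS.
suff -> : (\esum_(x in \bigcup_n S n) a x)%E =
    ereal_sup (range (fun n => \sum_(x \in S n) a x)%E).
  exact: ereal_nondecreasing_cvgn.
apply/le_anti/andP; split.
- apply: ge_ereal_sup => _ [A [finA AS] <-].
  have [n An] := nondecreasing_bigcup_finite_sub ndS finA AS.
  apply: (@le_trans _ _ (\sum_(x \in S n) a x)%E).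
    by apply: lee_fsum_nneg_subset => //; exact/subsetP.
  by apply: ereal_sup_ubound; exists n.
- apply: ge_ereal_sup => _ [n _ <-]; apply: ereal_sup_ubound.
  by exists (S n) => //; split => //; exact: bigcup_sup.
Qed.

Lemma count_bounded_eventually_false (p : pred nat) (b : nat) :
  (forall n, count p (iota 0 n) <= b)%N -> exists N, forall j, (N <= j)%N -> ~~ p j.
Proof.
move=> count_le; apply: contrapT => no_N.
have hit n : exists2 j, (n <= j)%N & p j.
  apply: contrapT => no_hit; apply: no_N; exists n => j nj.
  by apply/negP => pj; apply: no_hit; exists j.
have grow i : exists n, (i <= count p (iota 0 n))%N.
  elim: i => [|i [n cnt_n]]; first by exists 0%N.
  have [j nj pj] := hit n; exists j.+1.
  rewrite -[j.+1]addn1 iotaD count_cat /= add0n pj addn0 addn1 ltnS (leq_trans cnt_n) //.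
  by rewrite -(subnKC nj) iotaD count_cat leq_addr.
have [n] := grow b.+1.
by rewrite ltnNge count_le.
Qed.

Lemma sum_indicator_count (R : realType) (b : pred nat) N :
  (\sum_(0 <= j < N) ((b j)%:R : R)%:E)%E = ((count b (iota 0 N))%:R : R)%:E.
Proof.
rewrite sumEFin -natr_sum; congr (_%:R%:E).
rewrite -sum1_count [RHS]big_mkcond /index_iota subn0.
by apply: eq_bigr => j _; case: (b j).
Qed.

Definition heine_tuples_below {m : nat} (alpha : 'I_m -> nat) (N : nat) :
    set ('I_m -> {fset nat}) :=
  heine_tuples alpha `&` [set J | forall k x, x \in J k -> (x < N)%N].

Lemma nondecreasing_heine_tuples_below m (alpha : 'I_m -> nat) :
  {homo heine_tuples_below alpha : N N' / (N <= N')%N >-> N `<=` N'}.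
Proof.
move=> N N' NN' J [HJ J_lt]; split => // k x /J_lt xN.
exact: leq_trans xN NN'.
Qed.

Lemma bigcup_heine_tuples_below m (alpha : 'I_m -> nat) :
  \bigcup_N heine_tuples_below alpha N = heine_tuples alpha.
Proof.
apply/seteqP; split => [J [N _ []] //|J HJ].
exists (\max_k \max_(x <- J k) x).+1 => //; split => // k x xJ.
rewrite ltnS (leq_trans _ (leq_bigmax k)) //.
exact: (@leq_bigmax_seq _ _ xpredT id).
Qed.

Section Words.
Context {m N : nat}.
Implicit Types (c : {ffun 'I_N -> 'I_m.+1}) (alpha : 'I_m -> nat).

Definition padded c (j : nat) : nat := if insub j is Some i then c i : nat else 0%N.

Lemma padded_ge c j : (N <= j)%N -> padded c j = 0%N.
Proof. by move=> Nj; rewrite /padded insubF // ltnNge Nj. Qed.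

Lemma padded_le c j : (padded c j <= m)%N.
Proof. by rewrite /padded; case: insub => [i|//]; rewrite -ltnS. Qed.

Lemma padded_inj : injective padded.
Proof.
move=> c c' eq_cc'; apply/ffunP => i; apply: val_inj.
by have := congr1 (@^~ (val i)) eq_cc'; rewrite /padded valK.
Qed.

Definition letter_count c (v : nat) : nat :=
  count (fun j => padded c j == v) (iota 0 N).

Definition has_counts alpha c : bool := [forall k : 'I_m, letter_count c k.+1 == alpha k].

Definition positions c (k : 'I_m) : {fset nat} :=
  seq_fset tt [seq j <- iota 0 N | padded c j == k.+1].

Lemma mem_positions c k x : (x \in positions c k) = (padded c x == k.+1).
Proof.
rewrite /positions seq_fsetE mem_filter mem_iota add0n /=.
by case: (ltnP x N) => [_|Nx]; rewrite ?andbT // andbF padded_ge.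
Qed.

Lemma card_positions c k : #|` positions c k| = letter_count c k.+1.
Proof.
by rewrite size_seq_fset undup_id ?filter_uniq ?iota_uniq // size_filter.
Qed.

Lemma sum_positions c k :
  (\sum_(j <- positions c k) j = \sum_(0 <= j < N | padded c j == k.+1) j)%N.
Proof.
rewrite (perm_big _ (seq_fset_perm _ _)) undup_id ?filter_uniq ?iota_uniq //.
by rewrite big_filter /index_iota subn0.
Qed.

Lemma padded_eq_positions c j :
  padded c j = if [pick k | j \in positions c k] is Some k then k.+1 else 0%N.
Proof.
case: pickP => [k /=|/= not_in]; first by rewrite mem_positions => /eqP.
case Ecj: (padded c j) (padded_le c j) => [//|v] vm.
by have := not_in (Ordinal vm); rewrite mem_positions Ecj eqxx.
Qed.

Lemma positions_inj : injective positions.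
Proof.
move=> c c' eq_pos; apply: padded_inj; apply/funext => j.
by rewrite !padded_eq_positions eq_pos.
Qed.

Lemma positions_surj (J : 'I_m -> {fset nat}) :
  (forall k l, k != l -> forall x, x \in J k -> x \notin J l) ->
  (forall k x, x \in J k -> (x < N)%N) -> exists c, positions c = J.
Proof.
move=> disjJ J_lt.
pose c : {ffun 'I_N -> 'I_m.+1} :=
  [ffun i : 'I_N => if [pick k | val i \in J k] is Some k then lift ord0 k else ord0].
exists c; apply/funext => k; apply/fsetP => x; rewrite mem_positions.
case: (ltnP x N) => [xN|Nx]; last first.
  by rewrite padded_ge //; apply/esym/negP => /J_lt; rewrite ltnNge Nx.
rewrite /padded insubT ffunE /=; case: pickP => [l /= xl|/= not_in].
  rewrite eqSS; apply/eqP/idP => [/val_inj <- //|xk].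
  by apply: contraTeq xk => lk; apply: disjJ xl.
by apply/esym/negP => xk; have := not_in k; rewrite xk.
Qed.

Lemma image_positions alpha :
  positions @` [set c | has_counts alpha c] = heine_tuples_below alpha N.
Proof.
apply/seteqP; split => [_ [c /forallP c_alpha <-]|J [[cardJ disjJ] J_lt]].
  split; [split|] => [k|k l kl x|k x].
  - by rewrite card_positions; apply/eqP.
  - rewrite !mem_positions => /eqP ->; rewrite eqSS.
    by apply: contra kl => /eqP/val_inj ->.
  - by rewrite mem_positions; apply: contraTT; rewrite -leqNgt => /padded_ge ->.
have [c posc] := positions_surj _ disjJ J_lt.
by exists c => //; apply/forallP => k; rewrite -card_positions posc cardJ.
Qed.

Lemma finite_heine_tuples_below alpha : finite_set (heine_tuples_below alpha N).
Proof. by rewrite -image_positions; apply: finite_image; exact: finite_finset. Qed.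

End Words.

Section Weights.
Context {R : realType} {m : nat} (theta q : 'I_m -> R).

Definition tuple_weight (J : 'I_m -> {fset nat}) : R :=
  \prod_(k < m) q k ^+ (\sum_(j <- J k) j)%N.

(* w_j(v), written as a product over k so that products over j can be exchanged with it *)
Definition letter_odds (j v : nat) : R :=
  \prod_(k < m) (if v == k.+1 then theta k * q k ^+ j else 1).

Lemma letter_odds0 j : letter_odds j 0 = 1.
Proof. by rewrite /letter_odds big1. Qed.

Lemma letter_oddsS j (k : 'I_m) : letter_odds j k.+1 = theta k * q k ^+ j.
Proof.
rewrite /letter_odds (bigD1 k) //= eqxx big1 ?mulr1 // => l lk.
by rewrite eqSS; case: eqP => // /val_inj lk'; rewrite lk' eqxx in lk.
Qed.

Lemma prod_letter_odds N (c : {ffun 'I_N -> 'I_m.+1}) :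
  \prod_(j < N) letter_odds j (padded c j) =
  \prod_(k < m) theta k ^+ letter_count c k.+1 * tuple_weight (positions c).
Proof.
rewrite /tuple_weight -big_split /letter_odds exchange_big; apply: eq_bigr => k _.
rewrite -big_mkcond -(big_mkord (fun j => padded c j == k.+1) (fun j => theta k * q k ^+ j)).
rewrite big_split prodrXr sum_positions; congr (_ * _).
under eq_bigr do rewrite -[theta k]expr1.
by rewrite prodrXr sum1_count /index_iota subn0.
Qed.

Definition heine_partial_sum (alpha : 'I_m -> nat) (N : nat) : R :=
  \sum_(J \in heine_tuples_below alpha N) tuple_weight J.

Lemma sum_prod_letter_odds (alpha : 'I_m -> nat) N :
  \sum_(c : {ffun 'I_N -> 'I_m.+1} | has_counts alpha c)
     \prod_(j < N) letter_odds j (padded c j) =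
  \prod_(k < m) theta k ^+ alpha k * heine_partial_sum alpha N.
Proof.
rewrite /heine_partial_sum -image_positions fsbig_image; last first.
  by move=> c c' _ _; exact: positions_inj.
rewrite -(@bigfs _ _ _ _ (index_enum _)) ?index_enum_uniq //; last first.
  by move=> c _; rewrite mem_index_enum.
rewrite mulr_sumr; apply: eq_bigr => c /forallP c_alpha.
rewrite prod_letter_odds; congr (_ * _).
by apply: eq_bigr => k _; rewrite (eqP (c_alpha k)).
Qed.

End Weights.

Lemma heine_partial_sum_cvg (R : realType) m (q : 'I_m -> R) (alpha : 'I_m -> nat) :
  (forall k, 0 <= q k) ->
  (fun N => (heine_partial_sum q alpha N)%:E) @ \oo -->
  (\esum_(J in heine_tuples alpha) (tuple_weight q J)%:E)%E.
Proof.
move=> q_ge0; rewrite -bigcup_heine_tuples_below.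
have -> : (fun N => (heine_partial_sum q alpha N)%:E) =
    (fun N => \sum_(J \in heine_tuples_below alpha N) (tuple_weight q J)%:E)%E.
  by apply/funext => N; rewrite fsumEFin //; exact: finite_heine_tuples_below.
apply: esum_nondecreasing_cvg.
- by move=> J; rewrite lee_fin; apply: prodr_ge0 => k _; exact: exprn_ge0.
- by move=> N; exact: finite_heine_tuples_below.
- exact: nondecreasing_heine_tuples_below.
Qed.

Section Counts.
Context {R : realType} {T : Type} {m : nat} (Y : nat -> T -> nat).

Definition vanishes_from (N : nat) : set T := [set w | forall j, (N <= j)%N -> Y j w = 0%N].

Definition follows (f : nat -> nat) : set T := [set w | forall j, Y j w = f j].

Definition follows_until (f : nat -> nat) (K : nat) : set T :=
  [set w | forall j, (j < K)%N -> Y j w = f j].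

Lemma follows_bigcap f : follows f = \bigcap_K follows_until f K.
Proof.
apply/seteqP; split => [w Yf K _ j _|w Yf j]; first exact: Yf.
exact: (Yf j.+1).
Qed.

Definition counts_event (alpha : 'I_m -> nat) : set T :=
  [set w | forall k, Xcount (R:=R) Y k w = ((alpha k)%:R : R)%:E].

Lemma Xcount_vanishes_from (k : 'I_m) N w : vanishes_from N w ->
  Xcount (R:=R) Y k w = ((count (fun j => Y j w == k.+1) (iota 0 N))%:R : R)%:E.
Proof.
move=> Y0; rewrite /Xcount (nneseries_split _ N); last by move=> j _; rewrite lee_fin.
rewrite add0n eseries0 ?adde0; first exact: sum_indicator_count.
by move=> j Nj _; rewrite Y0.
Qed.

Lemma count_le_Xcount (k : 'I_m) w n :
  (((count (fun j => Y j w == k.+1) (iota 0 n))%:R : R)%:E <= Xcount (R:=R) Y k w)%E.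
Proof.
by rewrite -sum_indicator_count; apply: nneseries_lim_ge => j _ _; rewrite lee_fin.
Qed.

Hypothesis Y_le : forall j w, (Y j w <= m)%N.

Lemma counts_event_sub_vanishes alpha : counts_event alpha `<=` \bigcup_N vanishes_from N.
Proof.
move=> w X_alpha.
have late_k (k : 'I_m) : exists N, forall j, (N <= j)%N -> Y j w != k.+1.
  apply: (@count_bounded_eventually_false _ (alpha k)) => n.
  by have := count_le_Xcount k w n; rewrite X_alpha lee_fin ler_nat.
have [N late] := fin_all_exists late_k.
exists (\max_k N k)%N => // j maxj.
case Yj: (Y j w) (Y_le j w) => [//|v] vm.
have /negP := late (Ordinal vm) j (leq_trans (leq_bigmax _) maxj).
by rewrite Yj eqxx.
Qed.

Lemma counts_event_bigcup alpha :
  counts_event alpha = \bigcup_N (counts_event alpha `&` vanishes_from N).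
Proof. by rewrite -setI_bigcupr; apply/esym/setIidl/counts_event_sub_vanishes. Qed.

Lemma counts_vanishes_bigcup alpha N :
  counts_event alpha `&` vanishes_from N =
  \bigcup_(c in [set c : {ffun 'I_N -> 'I_m.+1} | has_counts alpha c]) follows (padded c).
Proof.
apply/seteqP; split => [w [X_alpha Y0]|w [c /forallP c_alpha Yc]].
- pose c : {ffun 'I_N -> 'I_m.+1} := [ffun i : 'I_N => inord (Y i w)].
  have Yc j : Y j w = padded c j.
    rewrite /padded; case: insubP => [i _ <-|]; first by rewrite ffunE inordK // ltnS.
    by rewrite -leqNgt => /Y0.
  exists c => //=; apply/forallP => k.
  have -> : letter_count c k.+1 = count (fun j => Y j w == k.+1) (iota 0 N).
    by apply: eq_count => j; rewrite Yc.
  by rewrite -(eqr_nat R) -eqe -(Xcount_vanishes_from k N w Y0) X_alpha.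
- have Y0 : vanishes_from N w by move=> j Nj; rewrite Yc padded_ge.
  split => // k; rewrite (Xcount_vanishes_from k N w Y0) -(eqP (c_alpha k)).
  by congr (_%:R%:E); apply: eq_count => j; rewrite Yc.
Qed.

End Counts.

Definition heine_rate {R : realType} {m : nat} (theta q : 'I_m -> R) (j : nat) : R :=
  \sum_(l < m) theta l * q l ^+ j.

Section HeineModel.
Context {R : realType} {m : nat} {theta q : 'I_m -> R}.
Hypotheses (theta_gt0 : forall k, 0 < theta k) (q_bounds : forall k, 0 < q k < 1).

Lemma heine_rate_ge0 j : 0 <= heine_rate theta q j.
Proof.
apply: sumr_ge0 => l _; rewrite mulr_ge0 ?exprn_ge0 ?ltW //.
by case/andP: (q_bounds l).
Qed.

Lemma sum_heine_rate_le n :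
  \sum_(j < n) heine_rate theta q j <= \sum_(l < m) theta l * (1 - q l)^-1.
Proof.
rewrite exchange_big; apply: ler_sum => l _; have /andP[q_gt0 q_lt1] := q_bounds l.
rewrite -(big_mkord xpredT (fun j => theta l * q l ^+ j)).
by apply: geometric_le_lim; rewrite ?ltW ?gtr0_norm.
Qed.

Lemma heine_Z_cvg :
  (fun n => \prod_(j < n) (1 + heine_rate theta q j)) @ \oo --> heine_Z theta q.
Proof. exact: (cvgn_prod1D heine_rate_ge0 sum_heine_rate_le). Qed.

Lemma heine_Z_ge1 : 1 <= heine_Z theta q.
Proof. exact: (limn_prod1D_ge1 heine_rate_ge0 sum_heine_rate_le). Qed.

Context {d : measure_display} {T : measurableType d} (P : probability T R).
Context {Y : nat -> T -> nat}.
Hypothesis Y_meas : forall j, measurable_fun setT (Y j).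
Hypothesis Y_indep : mutually_independent_nat P Y.
Hypothesis PY0 : forall j, P (Y j @^-1` [set 0%N]) =
  (1 / (1 + \sum_(l < m) theta l * q l ^+ j))%:E.
Hypothesis PYS : forall j (k : 'I_m), P (Y j @^-1` [set k.+1]) =
  (theta k * q k ^+ j / (1 + \sum_(l < m) theta l * q l ^+ j))%:E.

Lemma measurable_Y_preimage j (B : set nat) : measurable (Y j @^-1` B).
Proof. by rewrite -[X in measurable X]setTI; exact: Y_meas. Qed.

Lemma measurable_follows_until f K : measurable (follows_until Y f K).
Proof.
have -> : follows_until Y f K =
    \bigcap_j (Y j @^-1` (if (j < K)%N then [set f j] else setT)).
  apply/seteqP; split => [w Yf j _|w Yf j jK] /=; last by have := Yf j I; rewrite jK.
  by case: ifP => // /Yf.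
by apply: bigcapT_measurable => j; exact: measurable_Y_preimage.
Qed.

Lemma measurable_follows f : measurable (follows Y f).
Proof.
by rewrite follows_bigcap; apply: bigcapT_measurable => K; exact: measurable_follows_until.
Qed.

Lemma prob_Y_eq j v : (v <= m)%N ->
  P (Y j @^-1` [set v]) = (letter_odds theta q j v / (1 + heine_rate theta q j))%:E.
Proof.
case: v => [_|v vm]; first by rewrite PY0 letter_odds0.
by rewrite (PYS j (Ordinal vm)) (letter_oddsS theta q j (Ordinal vm)).
Qed.

Lemma prob_follows_until f K : (forall j, (f j <= m)%N) ->
  P (follows_until Y f K) =
  (\prod_(j < K) (letter_odds theta q j (f j) / (1 + heine_rate theta q j)))%:E.
Proof.
move=> f_le; have -> : follows_until Y f K =
    \bigcap_(j in [set` seq_fset tt (iota 0 K)]) (Y j @^-1` [set f j]).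
  apply/seteqP; split => [w Yf j jK|w Yf j jK]; last first.
    by apply: Yf; rewrite /mkset seq_fsetE mem_iota add0n jK.
  by apply: Yf; move: jK; rewrite /mkset seq_fsetE mem_iota add0n.
rewrite Y_indep (perm_big _ (seq_fset_perm _ _)) undup_id ?iota_uniq //.
have -> : iota 0 K = index_iota 0 K by rewrite /index_iota subn0.
rewrite big_mkord -prodEFin.
by apply: eq_bigr => j _; exact: prob_Y_eq.
Qed.

Lemma prob_follows f N :
  (forall j, (f j <= m)%N) -> (forall j, (N <= j)%N -> f j = 0%N) ->
  P (follows Y f) = ((\prod_(j < N) letter_odds theta q j (f j)) / heine_Z theta q)%:E.
Proof.
move=> f_le f0.
have follows_cvg : (fun n => P (follows_until Y f (N + n))) @ \oo --> P (follows Y f).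
  have -> : follows Y f = \bigcap_n follows_until Y f (N + n).
    apply/seteqP; split => [w Yf n _ j _|w Yf j]; first exact: Yf.
    by apply: (Yf j.+1 I); rewrite addnS ltnS leq_addl.
  apply: (nonincreasing_cvg_mu (F := fun n => follows_until Y f (N + n))).
  - by rewrite (le_lt_trans (probability_le1 _ (measurable_follows_until _ _))) ?ltey.
  - by move=> n; exact: measurable_follows_until.
  - by apply: bigcapT_measurable => n; exact: measurable_follows_until.
  - move=> n n' nn'; apply/subsetPset => w Yf j jK; apply: Yf.
    by rewrite (leq_trans jK) // leq_add2l.
have prob_until n : P (follows_until Y f (N + n)) =
    ((\prod_(j < N) letter_odds theta q j (f j)) *
     (\prod_(j < N + n) (1 + heine_rate theta q j))^-1)%:E.
  rewrite prob_follows_until // big_split /= prodfV; congr ((_ * _)%:E).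
  elim: n => [|n IH]; first by rewrite addn0.
  by rewrite addnS big_ord_recr /= IH f0 ?leq_addr // letter_odds0 mulr1.
have until_cvg : (fun n => P (follows_until Y f (N + n))) @ \oo -->
    ((\prod_(j < N) letter_odds theta q j (f j)) / heine_Z theta q)%:E.
  rewrite (funext prob_until); apply: cvg_EFin; first exact: nearW.
  apply: cvgMl_tmp; apply: cvgV; first by rewrite gt_eqF // (lt_le_trans ltr01 heine_Z_ge1).
  have := heine_Z_cvg; rewrite -(cvg_shiftn N).
  by apply: cvg_trans; apply: near_eq_cvg; apply: nearW => n /=; rewrite addnC.
exact: cvg_unique follows_cvg until_cvg.
Qed.

Hypothesis Y_le : forall j w, (Y j w <= m)%N.

Lemma measurable_counts_vanishes (alpha : 'I_m -> nat) N :
  measurable (counts_event (R:=R) Y alpha `&` vanishes_from Y N).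
Proof.
rewrite counts_vanishes_bigcup //; apply: fin_bigcup_measurable => [|c _].
- exact: finite_finset.
- exact: measurable_follows.
Qed.

Lemma prob_counts_vanishes_cvg (alpha : 'I_m -> nat) :
  (fun N => P (counts_event (R:=R) Y alpha `&` vanishes_from Y N)) @ \oo -->
  P (counts_event (R:=R) Y alpha).
Proof.
rewrite [X in _ --> P X](counts_event_bigcup _ Y_le).
apply: nondecreasing_cvg_mu.
- exact: measurable_counts_vanishes.
- by apply: bigcupT_measurable => N; exact: measurable_counts_vanishes.
- move=> N N' NN'; apply/subsetPset => w [X_alpha Y0]; split => // j N'j.
  by apply: Y0; exact: leq_trans N'j.
Qed.

Lemma prob_counts_vanishes (alpha : 'I_m -> nat) N :
  P (counts_event (R:=R) Y alpha `&` vanishes_from Y N) =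
  ((\prod_(k < m) theta k ^+ alpha k)%:E * (heine_partial_sum q alpha N)%:E *
   (heine_Z theta q)^-1%:E)%E.
Proof.
rewrite counts_vanishes_bigcup // measure_fin_bigcup.
- rewrite -(@bigfs _ _ _ _ (index_enum _)) ?index_enum_uniq //; last first.
    by move=> c _; rewrite mem_index_enum.
  transitivity (\sum_(c : {ffun 'I_N -> 'I_m.+1} | has_counts alpha c)
      ((\prod_(j < N) letter_odds theta q j (padded c j)) / heine_Z theta q)%:E)%E.
    by apply: eq_bigr => c _; exact: prob_follows (padded_le c) (padded_ge c).
  by rewrite sumEFin -mulr_suml sum_prod_letter_odds -!EFinM.
- exact: finite_finset.
- move=> c c' _ _ [w [Yc Yc']]; apply: padded_inj; apply/funext => j.
  by rewrite -Yc -Yc'.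
- by move=> c _; exact: measurable_follows.
Qed.

End HeineModel.

Theorem mainTheorem1 (R : realType) (d : measure_display) (T : measurableType d)
  (P : probability T R) (m : nat) (theta q : 'I_m -> R)
  (Y : nat -> T -> nat) :
  (0 < m)%N ->
  (forall k, 0 < theta k) ->
  (forall k, 0 < q k < 1) ->
  (forall j, measurable_fun setT (Y j)) ->
  (forall j w, (Y j w <= m)%N) ->
  mutually_independent_nat P Y ->
  (forall j, P (Y j @^-1` [set 0%N]) =
     (1 / (1 + \sum_(l < m) theta l * q l ^+ j))%:E) ->
  (forall j (k : 'I_m), P (Y j @^-1` [set k.+1]) =
     (theta k * q k ^+ j / (1 + \sum_(l < m) theta l * q l ^+ j))%:E) ->
  forall alpha : 'I_m -> nat,
    P [set w | forall k, Xcount (R:=R) Y k w = ((alpha k)%:R : R)%:E] =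
    heine_pmf theta q alpha.
Proof.
move=> _ theta_gt0 q_bounds Y_meas Y_le Y_indep PY0 PYS alpha.
have q_ge0 k : 0 <= q k by case/andP: (q_bounds k) => /ltW.
have counts_cvg := prob_counts_vanishes_cvg P Y_meas Y_le alpha.
have pmf_cvg : (fun N => P (counts_event (R:=R) Y alpha `&` vanishes_from Y N)) @ \oo -->
    heine_pmf theta q alpha.
  have := prob_counts_vanishes theta_gt0 q_bounds P Y_meas Y_indep PY0 PYS Y_le alpha.
  move=> /funext ->.
  by apply: cvgeZr => //; apply: cvgeZl => //; exact: heine_partial_sum_cvg.
exact: cvg_unique counts_cvg pmf_cvg.
Qed.
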